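(* Assume that $\mathbf{w} \in V_u(\omega_i) \times V_{\theta}(\omega_i)$, $\partial_n \mathbf{w} = 0$ on $\partial \omega_i$, and $|||\mathbf{w}|||_{s,\omega_i} < \infty$. For $0\leq t \leq s$, there holds \[ |||\mathbf{w}-\mathcal{I}_{L_i}^{\omega_i} \mathbf{w}|||_{t,\omega_i}^2 \leq \left( \frac{\Lambda_{L_i+1}^{\omega_i}}{H^2} \right)^{t-s} |||\mathbf{w}|||_{s,\omega_i}^2, \] where $\mathcal{I}_{L_i}^{\omega_i}$ is the local interpolation operator defined by \[ \mathcal{I}_{L_i}^{\omega_i} \mathbf{w} = \sum_{l=1}^{L_i} \mathcal{M}^{\omega_i}(\mathbf{w},\psi_l^{\omega_i}) \psi_l^{\omega_i}. \]
   Context: Setting: coupled thermomechanical problem on $\Omega\subset\mathbb{R}^d$ with Lamé coefficients $\lambda,\mu$, thermal conductivity $\kappa$, thermal expansion $\beta$; $V_u$, $V_\theta$ are $H^1$-type spaces for displacement and temperature. $\mathcal{T}^H$ is a coarse mesh of size $H$ with vertices $x_i$ and coarse neighborhoods $\omega_i$ (union of coarse elements containing $x_i$). For $\mathbf{w}=(\mathbf{u},\theta)$, $\mathbf{v}=(\mathbf{v}_u,v_\theta)$ the local bilinear forms are $\mathcal{A}^{\omega_i}(\mathbf{w},\mathbf{v}) = a^{\omega_i}(\mathbf{u},\mathbf{v}_u) - \gamma_1 b^{\omega_i}(\mathbf{v}_u,\theta) + \gamma_2 b^{\omega_i}(\mathbf{u},v_\theta) + d^{\omega_i}(\theta,v_\theta)$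 with $a^{\omega_i}(\mathbf{u},\mathbf{v})=\int_{\omega_i}\boldsymbol\sigma(\mathbf{u}):\boldsymbol\epsilon(\mathbf{v})$, $b^{\omega_i}(\mathbf{v},\theta)=\int_{\omega_i}\beta\theta\nabla\cdot\mathbf{v}$, $d^{\omega_i}(\theta,v)=\int_{\omega_i}\kappa\nabla\theta\cdot\nabla v$, and $\mathcal{M}^{\omega_i}(\mathbf{w},\mathbf{v})=\int_{\omega_i}(\lambda+2\mu)\mathbf{u}\cdot\mathbf{v}_u+\kappa\theta v_\theta$; $\gamma_1,\gamma_2$ are relaxation coefficients. The local coupled eigenproblem is $\mathcal{A}^{\omega_i}(\psi^{\omega_i},\mathbf{v}) = H^{-2}\Lambda^{\omega_i}\mathcal{M}^{\omega_i}(\psi^{\omega_i},\mathbf{v})$ for all $\mathbf{v}$, with eigenvalues assumed real, positive and ordered $\Lambda_1^{\omega_i}\le\Lambda_2^{\omega_i}\le\cdots$, and eigenfunctions $\{\psi_l^{\omega_i}\}$ assumed to form a complete $\mathcal{M}^{\omega_i}$-orthonormal basis of $\widetilde V(\omega_i)=\{\mathbf{v}\in V_u(\omega_i)\times V_\theta(\omega_i):\int_{\omega_i}\mathbf{v}=0\}$. The seminorm is $|||\mathbf{v}|||_{s,\omega_i}^2 = \sum_{l=1}^\infty (\Lambda_l^{\omega_i}/H^2)^s\,\mathcal{M}^{\omega_i}(\mathbf{v},\psi_l^{\omega_i})^2$, so that $|||\mathbf{v}|||_{0,\omega_i}^2=\mathcal{M}^{\omega_i}(\mathbf{v},\mathbf{v})$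 and $|||\mathbf{v}|||_{1,\omega_i}^2=\mathcal{A}^{\omega_i}(\mathbf{v},\mathbf{v})$. *)

From HB Require Import structures.
From mathcomp Require Import all_boot all_order all_algebra.
From mathcomp Require Import all_classical all_reals all_analysis.
Set Implicit Arguments. Unset Strict Implicit. Unset Printing Implicit Defensive.
Import Order.TTheory GRing.Theory Num.Theory.
Local Open Scope ring_scope.

(* Local interpolation operator I_L w = sum_{l=1}^{L} M(w, psi_l) psi_l
   (eigenfunctions indexed from 1, as in the paper; psi 0 is unused). *)
Definition interp (R : realType) (V : lmodType R) (M : V -> V -> R)
  (psi : nat -> V) (L : nat) (w : V) : V :=
  \sum_(1 <= l < L.+1) M w (psi l) *: psi l.

Definition snorm2 (R : realType) (V : lmodType R) (M : V -> V -> R)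
  (psi : nat -> V) (Lam : nat -> R) (H s : R) (v : V) : \bar R :=
  (\sum_(1 <= l <oo) (((Lam l / H ^+ 2) `^ s) * (M v (psi l)) ^+ 2)%:E)%E.

From HB Require Import structures.
From mathcomp Require Import all_boot all_order all_algebra.
From mathcomp Require Import all_classical all_reals all_analysis.
Import Order.TTheory GRing.Theory Num.Theory.
Local Open Scope ring_scope.

(* In the M-orthonormal eigenbasis the residual w - I_L w keeps exactly the
   coefficients of w of index l > L, and for those indices the weight
   x_l = Lambda_l / H^2 satisfies x_l >= a := Lambda_(L+1) / H^2.  Since
   t <= s, each term then obeys x_l^t <= a^(t-s) x_l^s, and summing these
   termwise bounds gives the estimate. *)

Section OrthonormalInterpolation.
Variables (R : realType) (V : lmodType R) (M : V -> V -> R) (psi : nat -> V).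
Hypothesis M_linear_l : forall v, linear (M ^~ v).
Hypothesis psi_orthonormal : forall l k, (1 <= l)%N -> (1 <= k)%N ->
  M (psi l) (psi k) = (l == k)%:R.

Let Ml (v : V) : {linear V -> R} :=
  HB.pack (M ^~ v) (GRing.isLinear.Build _ _ _ _ _ (M_linear_l v)).

Let MlE u v : M u v = Ml v u. Proof. by []. Qed.

Lemma coef_interp L w l : (1 <= l)%N ->
  M (interp M psi L w) (psi l) = if (l <= L)%N then M w (psi l) else 0.
Proof.
move=> l_ge1; rewrite /interp MlE linear_sum /=.
transitivity (\sum_(1 <= j < L.+1 | j == l) M w (psi j)).
  rewrite [RHS]big_mkcond !big_nat; apply: eq_bigr => j /andP[j_ge1 _].
  rewrite MlE linearZ /= psi_orthonormal //.
  by case: (j == l); [exact: mulr1 | exact: mulr0].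
by rewrite big_nat1_eq l_ge1 ltnS.
Qed.

Lemma coef_sub_interp L w l : (1 <= l)%N ->
  M (w - interp M psi L w) (psi l) = if (l <= L)%N then 0 else M w (psi l).
Proof.
move=> l_ge1; rewrite MlE raddfB /= coef_interp //.
by case: ifP; rewrite ?subrr ?subr0.
Qed.

End OrthonormalInterpolation.

Lemma powR_le_mul_powRB (R : realType) (a x t s : R) :
  0 < a -> a <= x -> t <= s -> x `^ t <= a `^ (t - s) * x `^ s.
Proof.
move=> a_gt0 a_le_x t_le_s; have x_gt0 := lt_le_trans a_gt0 a_le_x.
have -> : x `^ t = x `^ (t - s) * x `^ s.
  by rewrite -powRD ?subrK // (gt_eqF x_gt0) implybT.
apply: ler_wpM2r; first exact: powR_ge0.
rewrite -opprB !powRN lef_pV2 ?posrE ?powR_gt0 //.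
by apply: ge0_ler_powR; rewrite ?nnegrE ?subr_ge0 //; exact: ltW.
Qed.

Lemma lee_nneseries_from (R : realType) (u v : (\bar R)^nat) N :
  (forall i, (N <= i)%N -> (0 <= u i)%E) ->
  (forall i, (N <= i)%N -> (u i <= v i)%E) ->
  (\sum_(N <= i <oo) u i <= \sum_(N <= i <oo) v i)%E.
Proof.
move=> u_ge0 u_le_v; rewrite !(eseries_cond _ xpredT).
apply: (@lee_nneseries R _ _ _ 0%N) => i; first by move=> _ /andP[_]; exact: u_ge0.
by move=> /andP[_]; exact: u_le_v.
Qed.

Theorem mainTheorem1
  (R : realType) (V : lmodType R)
  (* V = V_u(omega_i) x V_theta(omega_i); Vt = mean-zero subspace tilde V(omega_i) *)
  (Vt : set V)
  (* the bilinear forms A^{omega_i} and M^{omega_i} *)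
  (A M : V -> V -> R)
  (* abstract predicate "d_n w = 0 on the boundary of omega_i" *)
  (neumann : V -> Prop)
  (H : R) (Lam : nat -> R) (psi : nat -> V) (L : nat) (w : V) (s t : R) :
  0 < H ->
  (forall u, linear (M u)) -> (forall v, linear (M ^~ v)) ->
  (forall u v, M u v = M v u) -> (forall v, 0 <= M v v) ->
  (forall u, linear (A u)) -> (forall v, linear (A ^~ v)) ->
  (* eigenpairs: A(psi_l, v) = H^-2 Lambda_l M(psi_l, v), real positive ordered *)
  (forall l, (1 <= l)%N -> forall v, A (psi l) v = H ^- 2 * Lam l * M (psi l) v) ->
  (forall l, (1 <= l)%N -> 0 < Lam l) ->
  (forall l k, (1 <= l)%N -> (l <= k)%N -> Lam l <= Lam k) ->
  (* complete M-orthonormal basis of Vt *)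
  (forall l, (1 <= l)%N -> Vt (psi l)) ->
  (forall l k, (1 <= l)%N -> (1 <= k)%N -> M (psi l) (psi k) = (l == k)%:R) ->
  (forall v, Vt v ->
     ((M v v)%:E = \sum_(1 <= l <oo) ((M v (psi l)) ^+ 2)%:E)%E) ->
  neumann w ->
  (snorm2 M psi Lam H s w < +oo)%E ->
  0 <= t -> t <= s ->
  (snorm2 M psi Lam H t (w - interp M psi L w)
     <= ((Lam L.+1 / H ^+ 2) `^ (t - s))%:E * snorm2 M psi Lam H s w)%E.
Proof.
move=> H_gt0 _ M_linear_l _ _ _ _ _ Lam_gt0 Lam_mono _ psi_orthonormal _ _ _ _ t_le_s.
have term_ge0 r v l : (0 <= ((Lam l / H ^+ 2) `^ r * M v (psi l) ^+ 2)%:E)%E.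
  by rewrite lee_fin mulr_ge0 ?powR_ge0 ?sqr_ge0.
rewrite /snorm2 -nneseriesZl; last by move=> *; exact: term_ge0.
apply: lee_nneseries_from => [l _|l l_ge1]; first exact: term_ge0.
rewrite -EFinM lee_fin coef_sub_interp //.
case: leqP => [_|L_lt_l]; first by rewrite expr0n /= mulr0 mulr_ge0 ?powR_ge0 // mulr_ge0 ?powR_ge0 ?sqr_ge0.
rewrite [leRHS]mulrA; apply: ler_wpM2r; first exact: sqr_ge0.
apply: powR_le_mul_powRB.
- by rewrite divr_gt0 ?Lam_gt0 ?exprn_gt0.
- apply: ler_wpM2r; last exact: Lam_mono.
  by rewrite invr_ge0 exprn_ge0 // ltW.
- exact: t_le_s.
Qed.
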